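(* Let $L, e_i, e_j, e_h, e_w, e_v$ be mutually independent random variables, where $L, e_i, e_j, e_h, e_w$ are mean-zero Gaussian. For constants $a_i, a_j, a_h, a_w$ define $X_m = a_m L + e_m$ for $m \in \{i,j,h,w\}$. Let $f$ be a measurable function such that $V_i = f(X_i, e_v)$ has finite second moment. Then the tetrad constraints hold among $V_i, X_j, X_h, X_w$ for every partition into pairs: $$\mathrm{Cov}(V_i,X_j)\,\mathrm{Cov}(X_h,X_w) = \mathrm{Cov}(V_i,X_h)\,\mathrm{Cov}(X_j,X_w) = \mathrm{Cov}(V_i,X_w)\,\mathrm{Cov}(X_j,X_h).$$ In particular this holds when $X_i$ is standard Gaussian and $V_i$ is the binary variable with $V_i = 1$ if $X_i \ge S_i$ and $V_i = 0$ otherwise, for a constant $S_i$.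
   Context: This describes a pure 1-factor measurement model with a single latent common cause $L$ of the linear Gaussian indicators $X_i, X_j, X_h, X_w$, in which the indicator $X_i$ is replaced by a (possibly non-Gaussian, e.g. binary) variable $V_i$ that is a function of $X_i$ and an independent noise term $e_v$. *)

From HB Require Import structures.
From mathcomp Require Import all_boot all_order all_algebra.
From mathcomp Require Import all_classical all_reals all_analysis.
Set Implicit Arguments. Unset Strict Implicit. Unset Printing Implicit Defensive.
Import Order.TTheory GRing.Theory Num.Theory.
Local Open Scope classical_set_scope.
Local Open Scope ring_scope.

(* Mutual independence of a finite family of real random variables:
   each is measurable, and for every choice of Borel sets A_k the joint
   probability factorises (taking A_k = setT recovers all subfamilies). *)
Definition mutually_independent_rvs {d} {T : measurableType d} {R : realType}
    (P : probability T R) (n : nat) (X : 'I_n -> T -> R) : Prop :=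
  (forall k, measurable_fun setT (X k)) /\
  forall A : 'I_n -> set R, (forall k, measurable (A k)) ->
    P (\bigcap_(k in [set: 'I_n]) (X k @^-1` A k)) =
    (\prod_(k < n) P (X k @^-1` A k))%E.

Definition is_gaussian {d} {T : measurableType d} {R : realType}
    (P : probability T R) (X : T -> R) (m s : R) : Prop :=
  0 < s /\ forall A : set R, measurable A -> P (X @^-1` A) = normal_prob m s A.

Definition is_centered_gaussian {d} {T : measurableType d} {R : realType}
    (P : probability T R) (X : T -> R) : Prop :=
  exists s : R, is_gaussian P X 0 s.

Definition tetrad_constraints {d} {T : measurableType d} {R : realType}
    (P : probability T R) (V Xj Xh Xw : T -> R) : Prop :=
  (covariance P V Xj * covariance P Xh Xw
     = covariance P V Xh * covariance P Xj Xw)%E /\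
  (covariance P V Xh * covariance P Xj Xw
     = covariance P V Xw * covariance P Xj Xh)%E.

(* Each X_m is a_m L + e_m, and V_i = f(a_i L + e_i, e_v) is a measurable
   function of (L, e_i, e_v), a vector independent of each of e_j, e_h, e_w.
   Independent integrable variables are uncorrelated (Fubini for the product of
   their laws), so bilinearity of the covariance gives
   Cov(V_i, X_m) = a_m Cov(V_i, L) and Cov(X_m, X_n) = a_m a_n Var(L) for m <> n;
   every tetrad product is then a_j a_h a_w Cov(V_i, L) Var(L). Gaussianity is
   only used to make L, e_j, e_h, e_w square integrable; in the binary case V_i
   is bounded. *)

From HB Require Import structures.
From mathcomp Require Import all_boot all_order all_algebra.
From mathcomp Require Import all_classical all_reals all_analysis.
From mathcomp Require Import measurable_realfun.
From mathcomp Require Import ring.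
Set Implicit Arguments. Unset Strict Implicit. Unset Printing Implicit Defensive.
Import Order.TTheory GRing.Theory Num.Theory.
Local Open Scope classical_set_scope.
Local Open Scope ring_scope.

Definition mfun_of d1 d2 (T1 : measurableType d1) (T2 : measurableType d2)
    (f : T1 -> T2) (mf : measurable_fun setT f) : {mfun T1 >-> T2} :=
  HB.pack f (isMeasurableFun.Build _ _ _ _ f mf).

Section normal_second_moment.
Context {R : realType}.
Notation mu := (@lebesgue_measure R).

Lemma ge0_integral_normal_prob (m s : R) (h : R -> \bar R) :
  measurable_fun setT h -> (forall x, 0 <= h x)%E ->
  (\int[normal_prob m s]_x h x = \int[mu]_x (h x * (normal_pdf m s x)%:E))%E.
Proof.
move=> mh h0; have dom := @normal_prob_dominates R m s.
rewrite -(Radon_Nikodym_SigmaFinite.change_of_variables dom) //.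
have mpdf : measurable_fun setT (fun x => (normal_pdf m s x)%:E).
  by apply/measurable_EFinP; exact: measurable_normal_pdf.
apply: ae_eq_integral => //.
- apply: emeasurable_funM => //; apply: measurable_int.
  exact: Radon_Nikodym_SigmaFinite.f_integrable.
- exact: emeasurable_funM.
- apply: ae_eqe_mul2l; apply: integral_ae_eq => //.
  + exact: Radon_Nikodym_SigmaFinite.f_integrable.
  + by move=> E _ mE; rewrite -Radon_Nikodym_SigmaFinite.f_integral.
Qed.

Lemma mulr_expRN_le1 (y : R) : 0 <= y -> y * expR (- y) <= 1.
Proof.
move=> y0; rewrite expRN ler_pdivrMr ?expR_gt0 // mul1r.
by apply: le_trans (expR_ge1Dx y); rewrite lerDr.
Qed.

Lemma sqr_mul_normal_fun_le (s x : R) : s != 0 ->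
  x ^+ 2 * normal_fun 0 s x <= s ^+ 2 *+ 4 * normal_fun 0 (s * Num.sqrt 2) x.
Proof.
move=> s0; rewrite /normal_fun !subr0.
have s4_gt0 : 0 < s ^+ 2 *+ 4 by rewrite pmulrn_lgt0 // exprn_even_gt0.
set y := x ^+ 2 / (s ^+ 2 *+ 4).
have -> : - x ^+ 2 / ((s * Num.sqrt 2) ^+ 2 *+ 2) = - y.
  by rewrite exprMn sqr_sqrtr // /y; field.
have -> : - x ^+ 2 / (s ^+ 2 *+ 2) = - y + - y by rewrite /y; field.
have -> : x ^+ 2 = s ^+ 2 *+ 4 * y by rewrite /y; field.
rewrite expRD -mulrA ler_pM2l // mulrA ler_piMl ?expR_ge0 // mulr_expRN_le1 //.
by rewrite divr_ge0 ?sqr_ge0 ?ltW.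
Qed.

Lemma normal_prob_integral_sqr_lty (s : R) : 0 < s ->
  (\int[normal_prob 0 s]_x (x ^+ 2)%:E < +oo)%E.
Proof.
move=> s0; set s' := s * Num.sqrt 2.
have s'0 : s' != 0 by rewrite mulf_neq0 ?gt_eqF ?sqrtr_gt0.
set K := normal_peak s * (s ^+ 2 *+ 4) / normal_peak s'.
have pdf_le x : x ^+ 2 * normal_pdf 0 s x <= K * normal_pdf 0 s' x.
  rewrite /normal_pdf (gt_eqF s0) (negbTE s'0).
  have -> : K * (normal_peak s' * normal_fun 0 s' x) =
      normal_peak s * (s ^+ 2 *+ 4 * normal_fun 0 s' x).
    by rewrite /K; field; rewrite gt_eqF ?normal_peak_gt0.
  by rewrite mulrCA ler_wpM2l ?normal_peak_ge0 ?sqr_mul_normal_fun_le ?gt_eqF.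
have mpdf (r : R) : measurable_fun setT (fun x => (normal_pdf 0 r x)%:E).
  by apply/measurable_EFinP; exact: measurable_normal_pdf.
rewrite ge0_integral_normal_prob //; first last.
- by move=> x; rewrite lee_fin sqr_ge0.
- by apply/measurable_EFinP; exact: measurable_funX.
apply: (@le_lt_trans _ _ (\int[mu]_x (K%:E * (normal_pdf 0 s' x)%:E))%E).
  apply: ge0_le_integral => //.
  - by move=> x _; rewrite -EFinM lee_fin mulr_ge0 ?sqr_ge0 ?normal_pdf_ge0.
  - by apply: emeasurable_funM; [apply/measurable_EFinP; exact: measurable_funX|exact: mpdf].
  - exact: emeasurable_funM (mpdf s').
  - by move=> x _; rewrite -EFinM lee_fin.
rewrite integralZl //; last exact: integrable_normal_pdf.
by rewrite integral_normal_pdf mule1 ltry.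
Qed.

End normal_second_moment.

Section square_integrable.
Local Open Scope ereal_scope.
Context d (T : measurableType d) (R : realType).

Lemma integrable_sqr_Lfun2 (mu : {measure set T -> \bar R}) (f : T -> R) :
  measurable_fun setT f -> mu.-integrable setT (fun x => (f x ^+ 2)%:E) ->
  f \in Lfun mu 2%:E.
Proof.
move=> mf /integrableP[_ f2_lty]; rewrite inE; apply/andP; split; first by rewrite inE.
rewrite inE /= /finite_norm unlock /Lnorm poweR_lty //.
under eq_integral => x _ do rewrite /comp abse_EFin poweR_EFin
  powR_mulrn ?normr_ge0 // real_normK ?num_real //.
rewrite (eq_integral (fun x => `|(f x ^+ 2)%:E|)) // => x _.
by rewrite gee0_abs // lee_fin sqr_ge0.
Qed.

Lemma bounded_Lfun2 (mu : {finite_measure set T -> \bar R}) (f : T -> R) (M : R) :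
  measurable_fun setT f -> (forall x, `|f x| <= M)%R -> f \in Lfun mu 2%:E.
Proof.
move=> mf f_le; apply: integrable_sqr_Lfun2 => //.
have msqr : measurable_fun setT (fun x => (f x ^+ 2)%:E).
  by apply/measurable_EFinP; exact: measurable_funX.
apply/integrableP; split => //.
under eq_integral => x _ do rewrite gee0_abs ?lee_fin ?sqr_ge0 //.
apply: (@le_lt_trans _ _ (\int[mu]_x (cst (M ^+ 2)%:E x))).
  apply: ge0_le_integral => //.
  - by move=> x _; rewrite lee_fin sqr_ge0.
  - move=> x _; rewrite lee_fin -real_normK ?num_real // ler_sqr ?nnegrE ?f_le //.
    exact: le_trans (normr_ge0 _) (f_le x).
by rewrite integral_cst //= lte_mul_pinfty ?lee_fin ?sqr_ge0 // -ge0_fin_numE ?fin_num_measure.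
Qed.

Lemma Lfun2_Lfun1 (P : probability T R) (X : T -> R) :
  X \in Lfun P 2%:E -> X \in Lfun P 1.
Proof. exact/Lfun_subset12/fin_num_measure. Qed.

Lemma centered_gaussian_Lfun2 (P : probability T R) (X : T -> R) :
  measurable_fun setT X -> is_centered_gaussian P X -> X \in Lfun P 2%:E.
Proof.
move=> mX [s [s0 lawX]]; apply: integrable_sqr_Lfun2 => //.
have msqr : measurable_fun setT (fun x : R => (x ^+ 2)%:E).
  by apply/measurable_EFinP; exact: measurable_funX.
apply/integrableP; split; first exact: measurableT_comp msqr mX.
under eq_integral => x _ do rewrite gee0_abs ?lee_fin ?sqr_ge0 //.
(* [normal_prob] lives on [measurableTypeR R], so the law of [X] is taken there. *)
pose Xm := @mfun_of _ _ _ (measurableTypeR R) _ mX.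
rewrite -(@ge0_integral_distribution _ _ _ _ _ P Xm (fun x => (x ^+ 2)%:E)) //; last first.
  by move=> x; rewrite lee_fin sqr_ge0.
have -> : \int[distribution P Xm]_y (y ^+ 2)%:E = \int[normal_prob 0 s]_y (y ^+ 2)%:E.
  by apply: eq_measure_integral => A mA _; exact: lawX.
exact: normal_prob_integral_sqr_lty.
Qed.

End square_integrable.

Section independence.
Local Open Scope ereal_scope.
Context d (T : measurableType d) (R : realType) (P : probability T R).

Definition indep_rv d1 d2 (U1 : measurableType d1) (U2 : measurableType d2)
    (X : T -> U1) (Y : T -> U2) : Prop :=
  forall A B, measurable A -> measurable B ->
    P (X @^-1` A `&` Y @^-1` B) = P (X @^-1` A) * P (Y @^-1` B).

Lemma indep_rv_comp d1 d2 d3 (U1 : measurableType d1) (U2 : measurableType d2)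
    (U3 : measurableType d3) (X : T -> U1) (Y : T -> U2) (g : U1 -> U3) :
  measurable_fun setT g -> indep_rv X Y -> indep_rv (g \o X) Y.
Proof.
move=> mg XY A B mA mB; apply: (XY (g @^-1` A)) => //.
by rewrite -[X in measurable X]setTI; exact: mg.
Qed.

Lemma pair_preimage_setI_mul d1 d2 (U1 : measurableType d1)
    (U2 : measurableType d2) (X1 : T -> U1) (X2 : T -> U2) (W V : set T) :
  measurable_fun setT X1 -> measurable_fun setT X2 ->
  measurable W -> measurable V ->
  (forall A1 A2, measurable A1 -> measurable A2 ->
    P (X1 @^-1` A1 `&` X2 @^-1` A2 `&` W) =
    P (X1 @^-1` A1 `&` X2 @^-1` A2) * P V) ->
  forall A, measurable A ->
    P ((fun w => (X1 w, X2 w)) @^-1` A `&` W) =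
    P ((fun w => (X1 w, X2 w)) @^-1` A) * P V.
Proof.
(* Both sides are finite measures in [A] that agree on the pi-system of
   measurable rectangles. *)
move=> mX1 mX2 mW mV rect A mA.
have mX := measurable_fun_pair mX1 mX2.
have PV0 : (0 <= fine (P V))%R by rewrite fine_ge0.
rewrite -[P V]fineK ?fin_num_measure // muleC.
apply: (@measure_unique _ R _ [set A1 `*` A2 | A1 in measurable & A2 in measurable]
  (fun=> setT) _ _ _ _ (pushforward (mrestr P mW) (mfun_of mX))
  (mscale (NngNum PV0) (distribution P (mfun_of mX)))) => //.
- by rewrite measurable_prod_measurableType.
- move=> _ _ [A1 mA1 [B1 mB1 <-]] [A2 mA2 [B2 mB2 <-]].
  rewrite -setXI; exists (A1 `&` A2); first exact: measurableI.
  by exists (B1 `&` B2) => //; exact: measurableI.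
- by move=> _; exists setT => //; exists setT => //; rewrite setXTT.
- by rewrite bigcup_const.
- move=> _ [A1 mA1 [A2 mA2 <-]].
  change (P (X1 @^-1` A1 `&` X2 @^-1` A2 `&` W) =
    (fine (P V))%:E * P (X1 @^-1` A1 `&` X2 @^-1` A2)).
  by rewrite fineK ?fin_num_measure // muleC rect.
- move=> _; apply: (le_lt_trans (probability_le1 _ _)); last exact: ltry.
  by apply: measurableI => //; rewrite -[X in measurable X]setTI; exact: mX.
Qed.

Lemma indep_rv_pair d1 d2 d3 (U1 : measurableType d1) (U2 : measurableType d2)
    (U3 : measurableType d3) (X1 : T -> U1) (X2 : T -> U2) (Y : T -> U3) :
  measurable_fun setT X1 -> measurable_fun setT X2 -> measurable_fun setT Y ->
  (forall A1 A2 B, measurable A1 -> measurable A2 -> measurable B ->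
    P (X1 @^-1` A1 `&` X2 @^-1` A2 `&` Y @^-1` B) =
    P (X1 @^-1` A1 `&` X2 @^-1` A2) * P (Y @^-1` B)) ->
  indep_rv (fun w => (X1 w, X2 w)) Y.
Proof.
move=> mX1 mX2 mY rect A B mA mB.
have mYB : measurable (Y @^-1` B) by rewrite -[X in measurable X]setTI; exact: mY.
by apply: pair_preimage_setI_mul => // A1 A2 mA1 mA2; exact: rect.
Qed.

Lemma mutually_independent_rvs_sub n m (X : 'I_n -> T -> R) (s : m.-tuple 'I_n) :
  uniq s -> mutually_independent_rvs P X ->
  mutually_independent_rvs P (fun j => X (tnth s j)).
Proof.
move=> /tuple_uniqP s_inj [mX XP]; split=> [j|A mA]; first exact: mX.
pose B k := if [pick j | tnth s j == k] is Some j then A j else setT.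
have BE j : B (tnth s j) = A j.
  by rewrite /B; case: pickP => [j' /eqP/s_inj -> //|/(_ j)]; rewrite eqxx.
have BT k : k \notin (tnth s @: 'I_m) -> B k = setT.
  by rewrite /B; case: pickP => // j /eqP <-; rewrite imset_f.
have mB k : measurable (B k) by rewrite /B; case: pickP.
have -> : \bigcap_(j in [set: 'I_m]) X (tnth s j) @^-1` A j =
          \bigcap_(k in [set: 'I_n]) X k @^-1` B k.
  apply/seteqP; split=> w Xw k _ /=.
    by rewrite /B; case: pickP => [j /eqP <-|//]; exact: Xw.
  by rewrite -BE; exact: Xw.
rewrite XP // (bigID [in (tnth s @: 'I_m)]) /=.
rewrite [X in _ * X]big1 ?mule1 => [|k /BT ->]; last first.
  by rewrite preimage_setT probability_setT.
rewrite big_imset /=; last by move=> i j _ _; exact: s_inj.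
by apply: eq_big => // j; rewrite BE.
Qed.

Lemma mutually_independent_rvs_setI4 n (X : 'I_n -> T -> R) (i0 i1 i2 i3 : 'I_n) :
  uniq [:: i0; i1; i2; i3] -> mutually_independent_rvs P X ->
  forall A0 A1 A2 A3, measurable A0 -> measurable A1 -> measurable A2 ->
    measurable A3 ->
  P (X i0 @^-1` A0 `&` X i1 @^-1` A1 `&` X i2 @^-1` A2 `&` X i3 @^-1` A3) =
  P (X i0 @^-1` A0) * P (X i1 @^-1` A1) * P (X i2 @^-1` A2) * P (X i3 @^-1` A3).
Proof.
move=> s_uniq /(mutually_independent_rvs_sub (s := [tuple i0; i1; i2; i3]) s_uniq).
move=> [_ XP] A0 A1 A2 A3 mA0 mA1 mA2 mA3.
have := XP (fun j : 'I_4 => nth setT [:: A0; A1; A2; A3] j).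
rewrite !big_ord_recr big_ord0 /= mul1e => <-; last by move=> [[|[|[|[|j]]]] ?].
congr (P _); apply/seteqP; split=> [w [[[w0 w1] w2] w3] [[|[|[|[|j]]]] ?] //|w Xw].
by do !split; [exact: (Xw ord0)|exact: (Xw (@Ordinal 4 1 isT))
  |exact: (Xw (@Ordinal 4 2 isT))|exact: (Xw ord_max)].
Qed.

Lemma mutually_independent_rvs_indep3 n (X : 'I_n -> T -> R) (i0 i1 i2 i3 : 'I_n) :
  uniq [:: i0; i1; i2; i3] -> mutually_independent_rvs P X ->
  indep_rv (fun w => (X i0 w, (X i1 w, X i2 w))) (X i3).
Proof.
move=> s_uniq XP; have mX := XP.1.
have mXpre i A : measurable A -> measurable (X i @^-1` A).
  by move=> mA; rewrite -[X in measurable X]setTI; exact: mX.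
have prod4 := mutually_independent_rvs_setI4 s_uniq XP.
have noise_pair A B D : measurable A -> measurable B -> measurable D ->
    P ((fun w => (X i1 w, X i2 w)) @^-1` D `&` (X i0 @^-1` A `&` X i3 @^-1` B)) =
    P ((fun w => (X i1 w, X i2 w)) @^-1` D) * P (X i0 @^-1` A `&` X i3 @^-1` B).
  move=> mA mB mD.
  have mW := measurableI _ _ (mXpre i0 A mA) (mXpre i3 B mB).
  apply: pair_preimage_setI_mul => //.
  move=> A1 A2 mA1 mA2.
  rewrite setIC setIACA [X i3 @^-1` B `&` _]setIC setIA prod4 //.
  have := prod4 setT A1 A2 setT measurableT mA1 mA2 measurableT.
  rewrite !preimage_setT setTI setIT => ->.
  have := prod4 A setT setT B mA measurableT measurableT mB.
  rewrite !preimage_setT !setIT => ->.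
  rewrite !probability_setT !mule1 !mul1e.
  by rewrite -!muleA muleCA; congr (_ * _); rewrite muleCA.
have indep03 A B : measurable A -> measurable B ->
    P (X i0 @^-1` A `&` X i3 @^-1` B) = P (X i0 @^-1` A) * P (X i3 @^-1` B).
  move=> mA mB; have := prod4 A setT setT B mA measurableT measurableT mB.
  by rewrite !preimage_setT !setIT !probability_setT !mule1.
apply: indep_rv_pair => // [|A D B mA mD mB].
  exact: measurable_fun_pair.
rewrite [X i0 @^-1` A `&` _]setIC -setIA noise_pair // indep03 //.
have := noise_pair A setT D mA measurableT mD.
rewrite preimage_setT setIT setIC => ->.
by rewrite muleA.
Qed.

End independence.

Section integral_product_measure_mul.
Local Open Scope ereal_scope.
Context d1 d2 (T1 : measurableType d1) (T2 : measurableType d2) (R : realType).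
Variables (m1 : {sigma_finite_measure set T1 -> \bar R})
  (m2 : {sigma_finite_measure set T2 -> \bar R}) (f : T1 -> R) (g : T2 -> R).
Hypotheses (if1 : m1.-integrable setT (EFin \o f))
  (ig2 : m2.-integrable setT (EFin \o g)).

Let mf : measurable_fun setT f := (measurable_EFinP _ _).1 (measurable_int _ if1).
Let mg : measurable_fun setT g := (measurable_EFinP _ _).1 (measurable_int _ ig2).

Let mfg : measurable_fun setT (fun z : T1 * T2 => (f z.1 * g z.2)%:E).
Proof.
by apply/measurable_EFinP; apply: measurable_funM;
  [exact: measurableT_comp mf measurable_fst|exact: measurableT_comp mg measurable_snd].
Qed.

Lemma integrable_product_measure_mul :
  (m1 \x m2).-integrable setT (fun z => (f z.1 * g z.2)%:E).
Proof.
apply/integrableP; split=> //.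
have mabs : measurable_fun setT (fun z : T1 * T2 => `|f z.1 * g z.2|%:E).
  by apply/measurable_EFinP; apply: measurableT_comp => //; exact/measurable_EFinP.
rewrite fubini_tonelli1 // /fubini_F /=.
have -> : (fun x => \int[m2]_y `|f x * g y|%:E) =
    (fun x => `|f x|%:E * \int[m2]_y `|g y|%:E).
  apply/funext => x; rewrite -ge0_integralZl //; last by apply/measurable_EFinP; exact: measurableT_comp.
  by apply: eq_integral => y _; rewrite normrM EFinM.
rewrite ge0_integralZr //; last 2 first.
- by apply/measurable_EFinP; exact: measurableT_comp.
- exact: integral_ge0.
have /integrableP[_ f_lty] := if1; have /integrableP[_ g_lty] := ig2.
by apply: lte_mul_pinfty; rewrite ?integral_ge0 // ge0_fin_numE ?integral_ge0.
Qed.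

Lemma integral_product_measure_mul :
  \int[m1 \x m2]_z (f z.1 * g z.2)%:E =
  \int[m1]_x (f x)%:E * \int[m2]_y (g y)%:E.
Proof.
rewrite -integral12_prod_meas1 /fubini_F /=; last exact: integrable_product_measure_mul.
have g_fin : \int[m2]_y (g y)%:E \is a fin_num by exact: integrable_fin_num.
have -> : (fun x => \int[m2]_y (f x * g y)%:E) =
    (fun x => (f x)%:E * \int[m2]_y (g y)%:E).
  apply/funext => x; rewrite -integralZl //; apply: eq_integral => y _; rewrite EFinM.
by rewrite -(fineK g_fin) integralZr.
Qed.

End integral_product_measure_mul.

Section independent_expectation.
Local Open Scope ereal_scope.
Context d (T : measurableType d) (R : realType) (P : probability T R).
Variables (X Y : T -> R).
Hypotheses (mX : measurable_fun setT X) (mY : measurable_fun setT Y)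
  (XY : indep_rv P X Y) (X1 : X \in Lfun P 1) (Y1 : Y \in Lfun P 1).

Let muX := distribution P (mfun_of mX).
Let muY := distribution P (mfun_of mY).
Let mXY := measurable_fun_pair mX mY.

Let distribution_pair A : measurable A ->
  (muX \x muY) A = distribution P (mfun_of mXY) A.
Proof. by apply: product_measure_unique => A1 A2 mA1 mA2; exact: XY. Qed.

Let integrable_distribution (Z : T -> R) (mZ : measurable_fun setT Z) :
  Z \in Lfun P 1 -> (distribution P (mfun_of mZ)).-integrable setT (EFin \o id).
Proof.
move=> Z1; apply: integrable_pushforward => //; first exact/measurable_EFinP.
by rewrite preimage_setT; exact/Lfun1_integrable.
Qed.

Let integrable_muX := integrable_distribution mX X1.
Let integrable_muY := integrable_distribution mY Y1.

Lemma indep_Lfun1_mul : (X * Y)%R \in Lfun P 1.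
Proof.
apply/Lfun1_integrable/integrableP; split.
  by apply/measurable_EFinP; exact: measurable_funM.
have /integrableP[mF F_lty] :=
  integrable_product_measure_mul integrable_muX integrable_muY.
rewrite (eq_measure_integral (distribution P (mfun_of mXY))) in F_lty; last first.
  by move=> A mA _; exact: distribution_pair.
by rewrite ge0_integral_distribution in F_lty => //; exact: measurableT_comp.
Qed.

Lemma expectation_indep_mul : 'E_P[X * Y] = 'E_P[X] * 'E_P[Y].
Proof.
rewrite !expectation.unlock.
transitivity (\int[muX \x muY]_z (z.1 * z.2)%:E).
  rewrite (eq_measure_integral (distribution P (mfun_of mXY))) => [|A mA _].
    rewrite integral_distribution //; first exact/measurable_EFinP/measurable_funM.
    exact/Lfun1_integrable/indep_Lfun1_mul.
  exact: distribution_pair.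
rewrite (integral_product_measure_mul integrable_muX integrable_muY).
by rewrite !integral_distribution //; exact/Lfun1_integrable.
Qed.

Lemma covariance_indep : covariance P X Y = 0.
Proof.
rewrite covarianceE //; last exact: indep_Lfun1_mul.
by rewrite expectation_indep_mul subee // fin_numM // expectation_fin_num.
Qed.

End independent_expectation.

Section covariance_one_factor.
Local Open Scope ereal_scope.
Context d (T : measurableType d) (R : realType) (P : probability T R).

Lemma Lfun2_covariance_fin_num (X Y : T -> R) :
  X \in Lfun P 2%:E -> Y \in Lfun P 2%:E -> covariance P X Y \is a fin_num.
Proof.
by move=> X2 Y2; apply: covariance_fin_num;
  [exact: Lfun2_Lfun1|exact: Lfun2_Lfun1|exact: Lfun2_mul_Lfun1].
Qed.

Let factorE (L e : T -> R) (a : R) :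
  (fun w => a * L w + e w)%R = (a \o* L \+ e)%R.
Proof. by apply/funext => w /=; rewrite mulrC. Qed.

Let scale_Lfun2 (L : T -> R) (a : R) :
  L \in Lfun P 2%:E -> (a \o* L)%R \in Lfun P 2%:E.
Proof. by apply: Lfun_scale; rewrite ler1n. Qed.

Lemma covariance_factor_r (V L e : T -> R) (a : R) :
  V \in Lfun P 2%:E -> L \in Lfun P 2%:E -> e \in Lfun P 2%:E ->
  covariance P V e = 0 ->
  covariance P V (fun w => a * L w + e w)%R = a%:E * covariance P V L.
Proof.
move=> V2 L2 e2 Ve0; rewrite factorE covarianceDr ?scale_Lfun2 // Ve0 adde0.
by rewrite covarianceZr //; [exact: Lfun2_Lfun1|exact: Lfun2_Lfun1|exact: Lfun2_mul_Lfun1].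
Qed.

Lemma covariance_factor (L e1 e2 : T -> R) (a1 a2 : R) :
  L \in Lfun P 2%:E -> e1 \in Lfun P 2%:E -> e2 \in Lfun P 2%:E ->
  covariance P L e1 = 0 -> covariance P L e2 = 0 -> covariance P e1 e2 = 0 ->
  covariance P (fun w => a1 * L w + e1 w)%R (fun w => a2 * L w + e2 w)%R =
  (a1 * a2)%:E * covariance P L L.
Proof.
move=> L2 e12 e22 Le1 Le2 e1e2.
have X12 : (fun w => a1 * L w + e1 w)%R \in Lfun P 2%:E.
  by rewrite factorE; apply: rpredD; [rewrite lee1n|move=> ?; exact: scale_Lfun2|].
rewrite covariance_factor_r //; last first.
  rewrite covarianceC covariance_factor_r ?(covarianceC P e2) //.
  by rewrite Le2 mule0.
rewrite (covarianceC P (fun w => a1 * L w + e1 w)%R) covariance_factor_r //.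
by rewrite muleA -EFinM mulrC.
Qed.

End covariance_one_factor.

Section one_factor_model.
Local Open Scope ereal_scope.
Context d (T : measurableType d) (R : realType) (P : probability T R).
Variables (L ei ej eh ew ev : T -> R) (ai aj ah aw : R) (f : R * R -> R).
Hypothesis indep_family :
  mutually_independent_rvs P (fun k : 'I_6 => nth L [:: L; ei; ej; eh; ew; ev] k).
Hypotheses (gL : is_centered_gaussian P L) (gj : is_centered_gaussian P ej)
  (gh : is_centered_gaussian P eh) (gw : is_centered_gaussian P ew).
Hypothesis mf : measurable_fun setT f.
Hypothesis V2 : (fun w => f (ai * L w + ei w, ev w))%R \in Lfun P 2%:E.

Let E (k : 'I_6) := nth L [:: L; ei; ej; eh; ew; ev] k.
Let V := (fun w => f (ai * L w + ei w, ev w))%R.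
Let g (z : R * (R * R)) := f (ai * z.1 + z.2.1, z.2.2)%R.

Let mE k : measurable_fun setT (E k) := indep_family.1 k.

Let mg : measurable_fun setT g.
Proof.
apply: measurableT_comp mf _; apply: measurable_fun_pair.
  apply: measurable_funD; first exact: measurable_funM measurable_fst.
  exact: measurableT_comp measurable_fst measurable_snd.
exact: measurableT_comp measurable_snd measurable_snd.
Qed.

Let noise_Lfun2 (k : 'I_6) : (1 < k < 5)%N -> E k \in Lfun P 2%:E.
Proof.
by case: k => [[|[|[|[|[|[|]]]]]] //= ? _];
  apply: centered_gaussian_Lfun2 (mE _) _.
Qed.

Let latent_indep_noise (k : 'I_6) : (1 < k < 5)%N ->
  indep_rv P (fun w => (L w, (ei w, ev w))) (E k).
Proof.
move=> k_noise.
apply: (mutually_independent_rvs_indep3 (i0 := ord0) (i1 := @Ordinal 6 1 isT)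
  (i2 := ord_max)) indep_family.
by case: k k_noise => [[|[|[|[|[|[|]]]]]] //=].
Qed.

Let noise_indep (k l : 'I_6) : (1 < k < 5)%N -> (1 < l < 5)%N -> k != l ->
  indep_rv P (E k) (E l).
Proof.
move=> k_noise l_noise kl.
have uniq_kl : uniq [:: k; ord0; @Ordinal 6 1 isT; l].
  move: k l k_noise l_noise kl => [[|[|[|[|[|[|]]]]]] //= ?] [[|[|[|[|[|[|]]]]]] //= ?].
have := mutually_independent_rvs_indep3 uniq_kl indep_family.
exact: (indep_rv_comp measurable_fst).
Qed.

Let mV : measurable_fun setT V.
Proof.
change (measurable_fun setT (g \o fun w => (L w, (ei w, ev w)))).
apply: measurableT_comp mg (measurable_fun_pair (mE ord0) _).
exact: measurable_fun_pair (mE (@Ordinal 6 1 isT)) (mE ord_max).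
Qed.

Let L2 : L \in Lfun P 2%:E := centered_gaussian_Lfun2 (mE ord0) gL.

Let cov_V_noise (k : 'I_6) : (1 < k < 5)%N -> covariance P V (E k) = 0.
Proof.
move=> k_noise; apply: (covariance_indep mV (mE k)); last 2 first.
- exact: Lfun2_Lfun1.
- exact/Lfun2_Lfun1/noise_Lfun2.
exact: indep_rv_comp mg (latent_indep_noise k_noise).
Qed.

Let cov_L_noise (k : 'I_6) : (1 < k < 5)%N -> covariance P L (E k) = 0.
Proof.
move=> k_noise; apply: (covariance_indep (mE ord0) (mE k)); last 2 first.
- exact: Lfun2_Lfun1.
- exact/Lfun2_Lfun1/noise_Lfun2.
exact: indep_rv_comp measurable_fst (latent_indep_noise k_noise).
Qed.

Let cov_noise (k l : 'I_6) : (1 < k < 5)%N -> (1 < l < 5)%N -> k != l ->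
  covariance P (E k) (E l) = 0.
Proof.
move=> k_noise l_noise kl; apply: (covariance_indep (mE k) (mE l)).
- exact: noise_indep.
- exact/Lfun2_Lfun1/noise_Lfun2.
- exact/Lfun2_Lfun1/noise_Lfun2.
Qed.

Let cov_V_factor (a : R) (k : 'I_6) : (1 < k < 5)%N ->
  covariance P V (fun w => a * L w + E k w)%R = a%:E * covariance P V L.
Proof.
by move=> k_noise; rewrite covariance_factor_r ?cov_V_noise ?noise_Lfun2.
Qed.

Let cov_factor (a b : R) (k l : 'I_6) :
  (1 < k < 5)%N -> (1 < l < 5)%N -> k != l ->
  covariance P (fun w => a * L w + E k w)%R (fun w => b * L w + E l w)%R =
  (a * b)%:E * covariance P L L.
Proof.
by move=> k_noise l_noise kl; rewrite covariance_factor ?cov_L_noise ?cov_noise ?noise_Lfun2.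
Qed.

Lemma tetrad_constraints_one_factor : tetrad_constraints P V
  (fun w => aj * L w + ej w)%R (fun w => ah * L w + eh w)%R
  (fun w => aw * L w + ew w)%R.
Proof.
pose j := @Ordinal 6 2 isT; pose h := @Ordinal 6 3 isT; pose w := @Ordinal 6 4 isT.
rewrite /tetrad_constraints (cov_V_factor aj (k := j)) // (cov_V_factor ah (k := h)) //.
rewrite (cov_V_factor aw (k := w)) // (cov_factor ah aw (k := h) (l := w)) //.
rewrite (cov_factor aj aw (k := j) (l := w)) // (cov_factor aj ah (k := j) (l := h)) //.
rewrite -[covariance P V L]fineK ?Lfun2_covariance_fin_num //.
rewrite -[covariance P L L]fineK ?Lfun2_covariance_fin_num // -!EFinM.
by split; congr EFin; ring.
Qed.

End one_factor_model.

Theorem mainTheorem1 (d : measure_display) (T : measurableType d) (R : realType)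
    (P : probability T R) (L ei ej eh ew ev : T -> R) (ai aj ah aw : R)
    (f : R * R -> R) :
  mutually_independent_rvs P
    (fun k : 'I_6 => nth L [:: L; ei; ej; eh; ew; ev] k) ->
  is_centered_gaussian P L -> is_centered_gaussian P ei ->
  is_centered_gaussian P ej -> is_centered_gaussian P eh ->
  is_centered_gaussian P ew ->
  measurable_fun setT f ->
  let Xi := fun w => ai * L w + ei w in
  let Xj := fun w => aj * L w + ej w in
  let Xh := fun w => ah * L w + eh w in
  let Xw := fun w => aw * L w + ew w in
  let Vi := fun w => f (Xi w, ev w) in
  (P.-integrable setT (fun w => ((Vi w) ^+ 2)%:E) ->
     tetrad_constraints P Vi Xj Xh Xw) /\
  (forall Si : R, is_gaussian P Xi 0 1 ->
     tetrad_constraints P (fun w => if Si <= Xi w then 1 else 0) Xj Xh Xw).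
Proof.
move=> indep gL _ gj gh gw mf Xi Xj Xh Xw Vi.
have mE := indep.1.
have mXi_ev : measurable_fun setT (fun w => (Xi w, ev w)).
  apply: measurable_fun_pair (mE ord_max).
  exact: measurable_funD (measurable_funM _ (mE ord0)) (mE (@Ordinal 6 1 isT)).
split=> [Vi2 | Si _].
  apply: tetrad_constraints_one_factor => //.
  exact: integrable_sqr_Lfun2 (measurableT_comp mf mXi_ev) Vi2.
(* [Vi] is bounded here. *)
pose step (z : R * R) := if Si <= z.1 then 1 else 0 : R.
have mstep : measurable_fun setT step.
  by apply: measurable_fun_ifT => //; exact: measurable_fun_ler measurable_fst.
apply: (tetrad_constraints_one_factor aj ah aw (ev := ev) (f := step)) => //.
apply: (@bounded_Lfun2 _ _ _ _ _ 1); first exact: measurableT_comp mstep mXi_ev.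
by move=> w; rewrite /step; case: ifP; rewrite ?normr1 ?normr0.
Qed.
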